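(* Consider the single sampling experiment with inputs $p_A,q_A,p_B,q_B$ and $\Delta>0$, and let $B=\mathrm{Bad}_\Delta(\tau,\nu_A)\cup\mathrm{Bad}_\Delta(\tau,\nu_B)$ and $\gamma=\tau(B)$. Then: 1. Alice accepts with probability exactly $\frac{1}{|\mathcal{U}|2^\Delta}$, and so does Bob. 2. The probability that the experiment is accepted is at most $\frac{1}{|\mathcal{U}|2^{2\Delta}}$ and at least $\frac{1-\gamma}{|\mathcal{U}|2^{2\Delta}}$. 3. If the experiment is accepted with positive probability and $\tau'$ denotes the distribution of its output conditioned on it being accepted, then $|\tau-\tau'|\le\gamma$.
   Context: $\mathcal{U}$ is a finite set and $p_A,q_A,p_B,q_B:\mathcal{U}\to[0,1]$ are such that $\tau=p_Ap_B$, $\nu_A=p_Aq_A$, $\nu_B=p_Bq_B$ (pointwise products) are probability distributions on $\mathcal{U}$. Single sampling experiment with parameter $\Delta>0$: using shared randomness, sample $u$ uniformly from $\mathcal{U}$ and $\alpha,\beta$ independently and uniformly from $[0,2^\Delta]$. Alice accepts if $\alpha\le p_A(u)$ and $\beta\le2^\Delta q_A(u)$. Bob accepts if $\alpha\le2^\Delta q_B(u)$ and $\beta\le p_B(u)$. If both accept, the experiment is accepted and its output is $u$; otherwise the output is $\bot$. For distributions $\tau,\nu$ on $\mathcal{U}$, $\mathrm{Bad}_\Delta(\tau,\nu)=\{u\in\mathcal{U}: 2^\Delta\nu(u)<\tau(u)\}$. Statistical distance: $|\mu-\nu|=\max_{T\subseteq\mathcal{U}}(\mu(T)-\nu(T))$.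 *)

From Stdlib Require Import Reals List.
Import ListNotations.
Open Scope R_scope.

(* A finite set U is represented by a type together with a duplicate-free
   list enumerating all of its elements. *)
Definition is_enum {U : Type} (en : list U) : Prop :=
  NoDup en /\ forall u, In u en.

Definition mass {U : Type} (f : U -> R) (T : list U) : R :=
  fold_right (fun u acc => f u + acc) 0 T.

Definition is_distr {U : Type} (en : list U) (d : U -> R) : Prop :=
  (forall u, 0 <= d u) /\ mass d en = 1.

Definition pw {U : Type} (f g : U -> R) : U -> R := fun u => f u * g u.

Definition Bad {U : Type} (Delta : R) (tau nu : U -> R) (u : U) : Prop :=
  Rpower 2 Delta * nu u < tau u.

Definition mass_bad {U : Type} (en : list U) (Delta : R) (tau nuA nuB : U -> R) : R :=
  mass (fun u => if Rlt_dec (Rpower 2 Delta * nuA u) (tau u) then tau u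
                 else if Rlt_dec (Rpower 2 Delta * nuB u) (tau u) then tau u
                 else 0) en.

Fixpoint sublists {A : Type} (l : list A) : list (list A) :=
  match l with
  | [] => [[]]
  | x :: t => let s := sublists t in s ++ map (cons x) s
  end.

Definition stat_dist {U : Type} (en : list U) (mu nu : U -> R) : R :=
  fold_right Rmax 0 (map (fun T => mass mu T - mass nu T) (sublists en)).

(* ---- The single sampling experiment ----
   alpha, beta are independent and uniform on [0, L] with L = 2^Delta.
   Every acceptance event considered is of the form
     "alpha <= c for all c in ca  and  beta <= d for all d in cb".
   For alpha uniform on [0,L], Pr[alpha <= c for all c in cs] is the length of
   [0,L] intersected with (-oo, min cs], divided by L. *)
Definition unif_le_all (L : R) (cs : list R) : R :=
  Rmax 0 (fold_right Rmin L cs) / L.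

(* probability of the rectangle event, by independence of alpha and beta *)
Definition rect_prob (L : R) (ca cb : list R) : R :=
  unif_le_all L ca * unif_le_all L cb.

(* probability of an event (given, for each u, by its constraints on alpha and
   beta) when u is uniform on U and alpha, beta uniform on [0, 2^Delta] *)
Definition exp_prob {U : Type} (en : list U) (Delta : R)
  (ca cb : U -> list R) : R :=
  mass (fun u => / INR (length en) * rect_prob (Rpower 2 Delta) (ca u) (cb u)) en.

Definition alice_a {U : Type} (Delta : R) (pA qA : U -> R) (u : U) : list R := [pA u].
Definition alice_b {U : Type} (Delta : R) (pA qA : U -> R) (u : U) : list R :=
  [Rpower 2 Delta * qA u].
Definition bob_a {U : Type} (Delta : R) (pB qB : U -> R) (u : U) : list R :=
  [Rpower 2 Delta * qB u].
Definition bob_b {U : Type} (Delta : R) (pB qB : U -> R) (u : U) : list R := [pB u].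

Definition prob_alice {U : Type} (en : list U) (Delta : R) (pA qA : U -> R) : R :=
  exp_prob en Delta (alice_a Delta pA qA) (alice_b Delta pA qA).
Definition prob_bob {U : Type} (en : list U) (Delta : R) (pB qB : U -> R) : R :=
  exp_prob en Delta (bob_a Delta pB qB) (bob_b Delta pB qB).

Definition both_a {U : Type} (Delta : R) (pA qA pB qB : U -> R) (u : U) : list R :=
  alice_a Delta pA qA u ++ bob_a Delta pB qB u.
Definition both_b {U : Type} (Delta : R) (pA qA pB qB : U -> R) (u : U) : list R :=
  alice_b Delta pA qA u ++ bob_b Delta pB qB u.

Definition prob_accept {U : Type} (en : list U) (Delta : R) (pA qA pB qB : U -> R) : R :=
  exp_prob en Delta (both_a Delta pA qA pB qB) (both_b Delta pA qA pB qB).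

(* Pr[experiment accepted and output = u0] *)
Definition prob_output {U : Type} (en : list U) (Delta : R) (pA qA pB qB : U -> R)
  (u0 : U) : R :=
  / INR (length en) *
  rect_prob (Rpower 2 Delta) (both_a Delta pA qA pB qB u0) (both_b Delta pA qA pB qB u0).

Definition tau_cond {U : Type} (en : list U) (Delta : R) (pA qA pB qB : U -> R)
  (u0 : U) : R :=
  prob_output en Delta pA qA pB qB u0 / prob_accept en Delta pA qA pB qB.

From Stdlib Require Import Reals List Lra Psatz.
Import ListNotations.
Open Scope R_scope.

(* Write L = 2^Delta > 1.  Since every constraint is a number in
   [0, L], each rectangle probability is an explicit product: Alice accepts u
   with probability pA(u) qA(u) / L, Bob with pB(u) qB(u) / L, and both accept u
   with probability w(u) / L^2, where
     w(u) = min(pA(u), L qB(u)) * min(L qA(u), pB(u))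
   is the "acceptance weight".  Pointwise, 0 <= w <= tau, and w = tau outside
   Bad(tau,nuA) \/ Bad(tau,nuB); hence tau - b <= w where b is tau restricted
   to the bad set (so mass b = gamma).  Summing gives items 1 and 2.  For
   item 3, tau' = w / mass w, and a general lemma on conditioning a
   sub-distribution w <= tau with tau - b <= w bounds the statistical distance
   by mass b. *)

Lemma mass_scaled {U} (f g : U -> R) (c : R) (T : list U) :
  (forall u, f u = c * g u) -> mass f T = c * mass g T.
Proof. intros Hfg; induction T as [|x T IH]; simpl; [ring | rewrite Hfg, IH; ring]. Qed.

Lemma mass_minus {U} (f g : U -> R) (T : list U) :
  mass (fun u => f u - g u) T = mass f T - mass g T.
Proof. induction T as [|x T IH]; simpl; [ring | rewrite IH; ring]. Qed.

Lemma mass_le {U} (f g : U -> R) (T : list U) :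
  (forall u, f u <= g u) -> mass f T <= mass g T.
Proof. intros Hfg; induction T as [|x T IH]; simpl; [lra | specialize (Hfg x); lra]. Qed.

Lemma mass_nonneg {U} (f : U -> R) (T : list U) :
  (forall u, 0 <= f u) -> 0 <= mass f T.
Proof. intros Hf; induction T as [|x T IH]; simpl; [lra | specialize (Hf x); lra]. Qed.

Lemma mass_sublist_le {U} (f : U -> R) (en T : list U) :
  (forall u, 0 <= f u) -> In T (sublists en) -> mass f T <= mass f en.
Proof.
  intros Hf; revert T; induction en as [|x en IH]; intros T HT; simpl in HT.
  - destruct HT as [<- | []]; simpl; lra.
  - apply in_app_or in HT as [HT | HT].
    + pose proof (IH T HT); specialize (Hf x); simpl; lra.
    + apply in_map_iff in HT as [T' [<- HT']].
      pose proof (IH T' HT'); simpl; lra.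
Qed.

Lemma fold_Rmax_le (l : list R) (c : R) :
  0 <= c -> (forall x, In x l -> x <= c) -> fold_right Rmax 0 l <= c.
Proof.
  intros Hc; induction l as [|x l IH]; intros Hl; simpl; [lra |].
  apply Rmax_lub; [apply Hl; left; reflexivity | apply IH; intros; apply Hl; right; assumption].
Qed.

Lemma length_pos_of_distr {U} (en : list U) (d : U -> R) :
  is_distr en d -> 0 < INR (length en).
Proof.
  intros [_ Hd1]; destruct en as [|x en]; [simpl in Hd1; lra |].
  apply lt_0_INR; simpl; lia.
Qed.

Lemma unif_le_single (L c : R) : 0 < L -> 0 <= c <= L -> unif_le_all L [c] = c / L.
Proof.
  intros HL Hc; unfold unif_le_all; simpl.
  rewrite Rmin_left, Rmax_right by lra; reflexivity.
Qed.

Lemma unif_le_pair (L c d : R) :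
  0 < L -> 0 <= c -> 0 <= d <= L -> unif_le_all L [c; d] = Rmin c d / L.
Proof.
  intros HL Hc Hd; unfold unif_le_all; simpl.
  rewrite (Rmin_left d L) by lra.
  rewrite Rmax_right by (apply Rmin_glb; lra); reflexivity.
Qed.

Lemma Rpower_2_double (Delta : R) :
  Rpower 2 (2 * Delta) = Rpower 2 Delta * Rpower 2 Delta.
Proof. replace (2 * Delta) with (Delta + Delta) by ring; apply Rpower_plus. Qed.

Lemma Rpower_2_gt_1 (Delta : R) : 0 < Delta -> 1 < Rpower 2 Delta.
Proof. intros HD; rewrite <- (Rpower_O 2) by lra; apply Rpower_lt; lra. Qed.

Lemma stat_dist_normalised {U} (en : list U) (tau g b tau' : U -> R) :
  (forall u, 0 <= g u) -> (forall u, 0 <= b u) -> (forall u, tau u - b u <= g u) ->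
  0 < mass g en <= 1 -> (forall u, tau' u = / mass g en * g u) ->
  stat_dist en tau tau' <= mass b en.
Proof.
  intros Hg Hb Htb HZ Htau'.
  apply fold_Rmax_le; [apply mass_nonneg; assumption |].
  intros x Hx; apply in_map_iff in Hx as [T [<- HT]].
  rewrite (mass_scaled _ _ _ T Htau').
  assert (Hgrow : mass g T <= / mass g en * mass g T).
  { rewrite <- (Rmult_1_l (mass g T)) at 1.
    apply Rmult_le_compat_r; [apply mass_nonneg; assumption |].
    rewrite <- Rinv_1; apply Rinv_le_contravar; lra. }
  assert (Hdiff : mass tau T - mass g T <= mass b T).
  { rewrite <- mass_minus; apply mass_le; intro u; specialize (Htb u); lra. }
  pose proof (mass_sublist_le b en T Hb HT); lra.
Qed.

Section Experiment.

Context {U : Type}.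
Variables (pA qA pB qB : U -> R) (Delta : R).
Hypothesis HD : 0 < Delta.
Hypotheses (HpA : forall u, 0 <= pA u <= 1) (HqA : forall u, 0 <= qA u <= 1)
           (HpB : forall u, 0 <= pB u <= 1) (HqB : forall u, 0 <= qB u <= 1).

Let L : R := Rpower 2 Delta.

Let HL : 1 < L.
Proof. apply Rpower_2_gt_1, HD. Qed.

Let scaled_in_range (y : R) : 0 <= y <= 1 -> 0 <= L * y <= L.
Proof. pose proof HL; intros; nra. Qed.

(* Probability (given u) that both players accept, times L^2. *)
Definition accept_weight (u : U) : R := Rmin (pA u) (L * qB u) * Rmin (L * qA u) (pB u).

(* tau restricted to the bad set Bad(tau,nuA) \/ Bad(tau,nuB); its mass is gamma. *)
Definition bad_part (u : U) : R :=
  if Rlt_dec (L * pw pA qA u) (pw pA pB u) then pw pA pB u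
  else if Rlt_dec (L * pw pB qB u) (pw pA pB u) then pw pA pB u else 0.

Lemma rect_alice (u : U) : rect_prob L [pA u] [L * qA u] = pw pA qA u / L.
Proof.
  pose proof HL; unfold rect_prob, pw; specialize (HpA u); specialize (HqA u).
  rewrite !unif_le_single by (try apply scaled_in_range; lra); field; lra.
Qed.

Lemma rect_bob (u : U) : rect_prob L [L * qB u] [pB u] = pw pB qB u / L.
Proof.
  pose proof HL; unfold rect_prob, pw; specialize (HpB u); specialize (HqB u).
  rewrite !unif_le_single by (try apply scaled_in_range; lra); field; lra.
Qed.

Lemma rect_both (u : U) :
  rect_prob L [pA u; L * qB u] [L * qA u; pB u] = accept_weight u / (L * L).
Proof.
  pose proof HL; unfold rect_prob, accept_weight; specialize (HpA u); specialize (HqA u);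
    specialize (HpB u); specialize (HqB u).
  rewrite !unif_le_pair by (try apply scaled_in_range; nra); field; lra.
Qed.

Lemma accept_weight_nonneg (u : U) : 0 <= accept_weight u.
Proof.
  pose proof HL; unfold accept_weight; specialize (HpA u); specialize (HqA u);
    specialize (HpB u); specialize (HqB u).
  apply Rmult_le_pos; apply Rmin_glb; nra.
Qed.

Lemma accept_weight_le_tau (u : U) : accept_weight u <= pw pA pB u.
Proof.
  pose proof HL; unfold accept_weight, pw; specialize (HpA u); specialize (HqA u);
    specialize (HpB u); specialize (HqB u).
  apply Rmult_le_compat; try (apply Rmin_glb; nra); [apply Rmin_l | apply Rmin_r].
Qed.

(* Outside the bad set both minima are attained at pA(u) and pB(u). *)
Lemma accept_weight_good (u : U) :
  ~ L * pw pA qA u < pw pA pB u -> ~ L * pw pB qB u < pw pA pB u ->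
  accept_weight u = pw pA pB u.
Proof.
  intros HgoodA HgoodB.
  pose proof (accept_weight_nonneg u); pose proof (accept_weight_le_tau u).
  unfold accept_weight, pw in *; specialize (HpA u); specialize (HqA u);
    specialize (HpB u); specialize (HqB u).
  destruct (Req_dec (pA u * pB u) 0) as [Hzero | Hpos]; [lra |].
  assert (HA : pA u <= L * qB u).
  { apply Rmult_le_reg_r with (pB u); [| lra].
    destruct (Req_dec (pB u) 0) as [E|]; [rewrite E in Hpos; lra | lra]. }
  assert (HB : pB u <= L * qA u).
  { apply Rmult_le_reg_r with (pA u); [| lra].
    destruct (Req_dec (pA u) 0) as [E|]; [rewrite E in Hpos; lra | lra]. }
  rewrite Rmin_left, Rmin_right by assumption; reflexivity.
Qed.

Lemma bad_part_nonneg (u : U) : 0 <= bad_part u.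
Proof.
  pose proof (accept_weight_nonneg u); pose proof (accept_weight_le_tau u).
  unfold bad_part; repeat destruct (Rlt_dec _ _); lra.
Qed.

Lemma tau_minus_bad_le_weight (u : U) : pw pA pB u - bad_part u <= accept_weight u.
Proof.
  pose proof (accept_weight_nonneg u).
  unfold bad_part; destruct (Rlt_dec _ _) as [|HgA]; [lra |].
  destruct (Rlt_dec _ _) as [|HgB]; [lra |].
  rewrite accept_weight_good by assumption; lra.
Qed.

Lemma accept_weight_mass_bounds (en : list U) :
  mass (pw pA pB) en = 1 ->
  1 - mass_bad en Delta (pw pA pB) (pw pA qA) (pw pB qB) <= mass accept_weight en <= 1.
Proof.
  intros Htau1; rewrite <- Htau1; split.
  - unfold mass_bad; rewrite <- mass_minus; apply mass_le; exact tau_minus_bad_le_weight.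
  - apply mass_le; exact accept_weight_le_tau.
Qed.

Lemma prob_alice_mass (en : list U) :
  prob_alice en Delta pA qA = / (INR (length en) * L) * mass (pw pA qA) en.
Proof.
  unfold prob_alice, exp_prob; apply mass_scaled; intro u.
  unfold alice_a, alice_b; fold L; rewrite rect_alice.
  rewrite Rinv_mult; unfold Rdiv; ring.
Qed.

Lemma prob_bob_mass (en : list U) :
  prob_bob en Delta pB qB = / (INR (length en) * L) * mass (pw pB qB) en.
Proof.
  unfold prob_bob, exp_prob; apply mass_scaled; intro u.
  unfold bob_a, bob_b; fold L; rewrite rect_bob.
  rewrite Rinv_mult; unfold Rdiv; ring.
Qed.

Lemma prob_output_weight (en : list U) (u : U) :
  prob_output en Delta pA qA pB qB u = / (INR (length en) * (L * L)) * accept_weight u.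
Proof.
  unfold prob_output, both_a, both_b, alice_a, alice_b, bob_a, bob_b.
  simpl app; fold L; rewrite rect_both.
  rewrite Rinv_mult; unfold Rdiv; ring.
Qed.

Lemma prob_accept_mass (en : list U) :
  prob_accept en Delta pA qA pB qB = / (INR (length en) * (L * L)) * mass accept_weight en.
Proof. apply mass_scaled; exact (prob_output_weight en). Qed.

End Experiment.

Theorem claim4p1 (U : Type) (en : list U) (pA qA pB qB : U -> R) (Delta : R) :
  is_enum en ->
  (forall u, 0 <= pA u <= 1) -> (forall u, 0 <= qA u <= 1) ->
  (forall u, 0 <= pB u <= 1) -> (forall u, 0 <= qB u <= 1) ->
  is_distr en (pw pA pB) -> is_distr en (pw pA qA) -> is_distr en (pw pB qB) ->
  0 < Delta ->
  let gamma := mass_bad en Delta (pw pA pB) (pw pA qA) (pw pB qB) in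
  let N := INR (length en) in
  (prob_alice en Delta pA qA = 1 / (N * Rpower 2 Delta) /\
   prob_bob en Delta pB qB = 1 / (N * Rpower 2 Delta)) /\
  (prob_accept en Delta pA qA pB qB <= 1 / (N * Rpower 2 (2 * Delta)) /\
   (1 - gamma) / (N * Rpower 2 (2 * Delta)) <= prob_accept en Delta pA qA pB qB) /\
  (0 < prob_accept en Delta pA qA pB qB ->
   stat_dist en (pw pA pB) (tau_cond en Delta pA qA pB qB) <= gamma).
Proof.
  intros _ HpA HqA HpB HqB Htau HnuA HnuB HD gamma N.
  pose proof (length_pos_of_distr en _ Htau) as HN; fold N in HN.
  pose proof (Rpower_2_gt_1 Delta HD) as HL.
  pose proof (accept_weight_mass_bounds pA qA pB qB Delta HD HpA HqA HpB HqB en (proj2 Htau))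
    as [Hgamma Hw1]; fold gamma in Hgamma.
  rewrite Rpower_2_double, prob_alice_mass, prob_bob_mass, prob_accept_mass, (proj2 HnuA),
    (proj2 HnuB) by assumption; fold N.
  set (L := Rpower 2 Delta) in *; set (w := accept_weight pA qA pB qB Delta) in *.
  assert (HNLL : 0 < N * (L * L)) by (apply Rmult_lt_0_compat; nra).
  split; [split; field; lra | split; [split |]].
  - apply (Rmult_le_reg_l (N * (L * L))); [lra |]; field_simplify; lra.
  - apply (Rmult_le_reg_l (N * (L * L))); [lra |]; field_simplify; lra.
  - intros Hpos.
    assert (Hmw : 0 < mass w en).
    { apply (Rmult_lt_reg_l (/ (N * (L * L)))); [apply Rinv_0_lt_compat |]; lra. }
    apply stat_dist_normalised with (g := w) (b := bad_part pA qA pB qB Delta); auto.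
    + intro; apply accept_weight_nonneg; auto.
    + intro; apply bad_part_nonneg; auto.
    + intro; apply tau_minus_bad_le_weight; auto.
    + intro u; unfold tau_cond; rewrite prob_output_weight, prob_accept_mass by assumption.
      fold N L w; field; lra.
Qed.
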